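(* Let $m,n\in\mathbb{N}$, let $\Omega\subset\mathbb{R}^n$ be a bounded open set with smooth boundary, $\mathfrak{U}:=\mathbb{R}^m\times\Omega$, and $R>0$ with $\Omega\subseteq\{r<R\}$. Let $\varepsilon,a,b>0$ satisfy $a\ge(m+n)^2$, $a\gg R$, $\varepsilon\ll_{m,n}b\ll R^{-1}$, and let \[ \zeta_{a,b;\varepsilon}:=\left\{\frac{f}{(1+\varepsilon u)(1-\varepsilon v)}\exp\left[\frac{2bf^{1/2}}{(1-\varepsilon u)^{1/2}(1+\varepsilon v)^{1/2}}\right]\right\}^{2a}. \] Then on $\mathfrak{U}\cap\mathfrak{D}$, for every Cartesian coordinate index $\alpha$, \[ |\nabla^\alpha\zeta_{a,b;\varepsilon}|\lesssim aR\,\zeta_{a,b;\varepsilon}f^{-1}. \]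
   Context: On $\mathbb{R}^{m+n}$ with Cartesian coordinates $t\in\mathbb{R}^m$, $x\in\mathbb{R}^n$ and flat metric $g=-\sum dt_i^2+\sum dx_j^2$ (indices raised with $g$): $r=|x|$, $\tau=|t|$, $u=\frac12(\tau-r)$, $v=\frac12(\tau+r)$, $f=-uv=\frac14(|x|^2-|t|^2)$, $\mathfrak{D}=\{f>0\}$. $A\lesssim B$ means $A\le CB$ for some constant $C>0$; $A\gg B$ means $A\ge KB$ for sufficiently large $K$; $A\ll_{m,n}B$ means $A\le cB$ with $c>0$ sufficiently small depending on $m,n$, and $A\ll B$ analogously with an absolute constant. *)

From HB Require Import structures.
From mathcomp Require Import all_boot all_order all_algebra.
From mathcomp Require Import all_classical all_reals all_analysis.
Set Implicit Arguments. Unset Strict Implicit. Unset Printing Implicit Defensive.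
Import Order.TTheory GRing.Theory Num.Theory.
Import numFieldNormedType.Exports.
Local Open Scope classical_set_scope.
Local Open Scope ring_scope.

Section Defs.
Variable R : realType.

Definition enorm (k : nat) (y : 'rV[R]_k) : R :=
  Num.sqrt (\sum_(i < k) y ord0 i ^+ 2).

Definition ebasis (k : nat) (i : 'I_k) : 'rV[R]_k := delta_mx ord0 i.

Definition partial (k : nat) (i : 'I_k) (g : 'rV[R]_k -> R) : 'rV[R]_k -> R :=
  fun y => derive g y (ebasis i).

Definition iter_partial (k : nat) (js : seq 'I_k) (g : 'rV[R]_k -> R) :=
  foldr (fun j h => partial j h) g js.

Definition smooth_fun (k : nat) (g : 'rV[R]_k -> R) : Prop :=
  forall (js : seq 'I_k) (j : 'I_k) (y : 'rV[R]_k),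
    derivable (iter_partial js g) y (ebasis j).

Definition smooth_boundary (k : nat) (O : set 'rV[R]_k) : Prop :=
  forall p, closure O p -> ~ O p ->
    exists (r : R) (rho : 'rV[R]_k -> R),
      0 < r /\ smooth_fun rho /\ rho p = 0 /\
      (exists j, partial j rho p != 0) /\
      (forall y, ball p r y -> (O y <-> rho y < 0)).

Definition tpart (m n : nat) (p : 'rV[R]_(m + n)) : 'rV[R]_m := lsubmx p.
Definition xpart (m n : nat) (p : 'rV[R]_(m + n)) : 'rV[R]_n := rsubmx p.

Definition rr (m n : nat) (p : 'rV[R]_(m + n)) : R := enorm (xpart p).
Definition tau (m n : nat) (p : 'rV[R]_(m + n)) : R := enorm (tpart p).
Definition uu (m n : nat) (p : 'rV[R]_(m + n)) : R := (tau p - rr p) / 2.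
Definition vv (m n : nat) (p : 'rV[R]_(m + n)) : R := (tau p + rr p) / 2.
Definition ff (m n : nat) (p : 'rV[R]_(m + n)) : R := - (uu p * vv p).

Definition zeta (m n : nat) (a b eps : R) (p : 'rV[R]_(m + n)) : R :=
  ((ff p / ((1 + eps * uu p) * (1 - eps * vv p))) *
    expR (2 * b * Num.sqrt (ff p) /
          (Num.sqrt (1 - eps * uu p) * Num.sqrt (1 + eps * vv p)))) `^ (2 * a).

Definition ginv (m n : nat) (al : 'I_(m + n)) : R :=
  if (al < m)%N then -1 else 1.

(* nabla^alpha g = g^{alpha beta} d_beta g (flat metric, Cartesian coords). *)
Definition nabla_up (m n : nat) (al : 'I_(m + n)) (g : 'rV[R]_(m + n) -> R)
  : 'rV[R]_(m + n) -> R :=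
  fun p => ginv al * partial al g p.

End Defs.

Arguments enorm {R k}.
Arguments ebasis {R k}.
Arguments partial {R k}.
Arguments iter_partial {R k}.
Arguments smooth_fun {R k}.
Arguments smooth_boundary {R k}.
Arguments tpart {R m n}.
Arguments xpart {R m n}.
Arguments rr {R m n}.
Arguments tau {R m n}.
Arguments uu {R m n}.
Arguments vv {R m n}.
Arguments ff {R m n}.
Arguments zeta {R m n}.
Arguments ginv {R m n}.
Arguments nabla_up {R m n}.

From HB Require Import structures.
From mathcomp Require Import all_boot all_order all_algebra.
From mathcomp Require Import all_classical all_reals all_analysis.
From mathcomp Require Import ring lra.
Import Order.TTheory GRing.Theory Num.Theory.
Import numFieldNormedType.Exports.
Local Open Scope classical_set_scope.
Local Open Scope ring_scope.

(* Since v - u = r and u v = -f, the denominators of zeta are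
   (1 + eps u)(1 - eps v) = 1 - eps r + eps^2 f and
   (1 - eps u)(1 + eps v) = 1 + eps r + eps^2 f, so zeta is a function of r and f.
   Along a coordinate line only one of |t|^2, |x|^2 moves, so r has slope at most 1
   and f slope at most r/2 < R/2.  The logarithmic derivative of zeta is 2a times
   f'/f - B'/B + (2b sqrt f / sqrt D)'; multiplied by f, the first term is at most
   R/2 and, as eps R and b R are small, each of the other three at most R/16.
   Hence |d_alpha zeta| <= 2 a R zeta / f. *)

Section LogderivTerms.
Context {R : realType}.

Lemma logderiv_B_term_le {eps Rd s B dB : R} :
  0 <= eps -> 16 * eps * Rd <= 1 -> 0 < s -> 2 * s <= Rd ->
  15 / 16 <= B -> `|dB| <= 2 * eps ->
  `|s ^+ 2 * dB / B| <= Rd / 16.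
Proof.
move=> eps_ge0 epsRd s_gt0 s_le B_ge dB_le.
have B_gt0 : 0 < B by lra.
rewrite normrM normfV (gtr0_norm B_gt0) ler_pdivrMr // normrM ger0_norm ?sqr_ge0 //.
have s2_le : s ^+ 2 <= Rd ^+ 2 / 4 by nra.
have := ler_pM (sqr_ge0 s) (normr_ge0 _) s2_le dB_le.
have : Rd / 16 * (15 / 16) <= Rd / 16 * B by rewrite ler_wpM2l //; lra.
nra.
Qed.

Lemma logderiv_f_term_le {b Rd s q df : R} :
  0 <= b -> 4 * b * Rd <= 1 -> 0 < s -> 2 * s <= Rd -> 1 <= q -> 2 * `|df| <= Rd ->
  `|b * (s * df / q)| <= Rd / 16.
Proof.
move=> b_ge0 bRd s_gt0 s_le q_ge1 df_le.
have q_gt0 : 0 < q by lra.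
rewrite !normrM normfV (gtr0_norm q_gt0) (ger0_norm b_ge0) (gtr0_norm s_gt0).
have : s * `|df| / q <= s * `|df|.
  rewrite ler_pdivrMr // -[leLHS]mulr1; apply: ler_wpM2l => //.
  exact: mulr_ge0 (ltW s_gt0) (normr_ge0 _).
have := ler_pM (ltW s_gt0) (normr_ge0 _) (_ : s <= Rd / 2) (_ : `|df| <= Rd / 2).
nra.
Qed.

Lemma logderiv_D_term_le {eps b Rd s q dD : R} :
  0 <= eps -> 0 <= b -> 16 * eps * Rd <= 1 -> 4 * b * Rd <= 1 ->
  0 < s -> 2 * s <= Rd -> 1 <= q -> `|dD| <= 2 * eps ->
  `|b * (s ^+ 3 * dD / q ^+ 3)| <= Rd / 16.
Proof.
move=> eps_ge0 b_ge0 epsRd bRd s_gt0 s_le q_ge1 dD_le.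
have q3_ge1 : 1 <= q ^+ 3 by rewrite exprn_ege1.
have s3_le : s ^+ 3 <= (Rd / 2) ^+ 3 by rewrite lerXn2r // ?nnegrE; lra.
have num_le : `|s ^+ 3 * dD| <= (Rd / 2) ^+ 3 * (2 * eps).
  rewrite normrM normrX (gtr0_norm s_gt0).
  exact: ler_pM (exprn_ge0 3 (ltW s_gt0)) (normr_ge0 _) s3_le dD_le.
have frac_le : `|s ^+ 3 * dD / q ^+ 3| <= (Rd / 2) ^+ 3 * (2 * eps).
  have q3_gt0 : 0 < q ^+ 3 by lra.
  rewrite normrM normfV (gtr0_norm q3_gt0) ler_pdivrMr //.
  apply: le_trans num_le _; rewrite -[leLHS]mulr1 ler_wpM2l // mulr_ge0 // ?exprn_ge0; lra.
have bRd_epsRd : (b * Rd) * (eps * Rd) <= 1 / 64.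
  by apply: le_trans (ler_pM _ _ (_ : b * Rd <= 1 / 4) (_ : eps * Rd <= 1 / 16)) _;
    rewrite ?mulr_ge0 //; lra.
rewrite normrM (ger0_norm b_ge0).
apply: le_trans (ler_wpM2l b_ge0 frac_le) _.
have -> : b * ((Rd / 2) ^+ 3 * (2 * eps)) = Rd * ((b * Rd) * (eps * Rd)) / 4 by field.
nra.
Qed.

End LogderivTerms.

Section ZetaProfile.
Context {R : realType}.
Variables (eps b : R).

Definition zeta_rf (c r f : R) : R :=
  ((f / (1 - eps * r + eps ^+ 2 * f)) *
    expR (2 * b * Num.sqrt f / Num.sqrt (1 + eps * r + eps ^+ 2 * f))) `^ c.

Definition zeta_rf_logderiv (r f dr df : R) : R :=
  let B := 1 - eps * r + eps ^+ 2 * f in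
  let D := 1 + eps * r + eps ^+ 2 * f in
  df / f - (eps ^+ 2 * df - eps * dr) / B
  + b * (df / (Num.sqrt f * Num.sqrt D)
         - Num.sqrt f * (eps * dr + eps ^+ 2 * df) / Num.sqrt D ^+ 3).

Lemma is_derive_zeta_rf (c x dr df : R) (r f : R -> R) :
  is_derive x 1 r dr -> is_derive x 1 f df -> 0 < f x ->
  0 < 1 - eps * r x + eps ^+ 2 * f x -> 0 < 1 + eps * r x + eps ^+ 2 * f x ->
  is_derive x 1 (fun h => zeta_rf c (r h) (f h))
    (c * zeta_rf c (r x) (f x) * zeta_rf_logderiv (r x) (f x) dr df).
Proof.
move=> r' f' f_gt0 B_gt0 D_gt0.
set B := 1 - eps * r x + eps ^+ 2 * f x in B_gt0 *.
set D := 1 + eps * r x + eps ^+ 2 * f x in D_gt0 *.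
have B' : is_derive x 1 (fun h => (1 - eps * r h + eps ^+ 2 * f h)^-1)
    (- B ^- 2 * (eps ^+ 2 * df - eps * dr)).
  apply: is_deriveV; first by rewrite gt_eqF.
  by apply: is_derive_eq; rewrite /GRing.scale /=; ring.
have sqrtf' : is_derive x 1 (fun h => Num.sqrt (f h)) ((2 * Num.sqrt (f x))^-1 * df).
  exact: is_derive1_comp (is_derive1_sqrt f_gt0) f'.
have sqrtD' : is_derive x 1 (fun h => (Num.sqrt (1 + eps * r h + eps ^+ 2 * f h))^-1)
    (- Num.sqrt D ^- 2 * ((2 * Num.sqrt D)^-1 * (eps * dr + eps ^+ 2 * df))).
  apply: is_deriveV; first by rewrite gt_eqF ?sqrtr_gt0.
  apply: (is_derive1_comp (g := fun h => 1 + eps * r h + eps ^+ 2 * f h)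
    (is_derive1_sqrt D_gt0)).
  by apply: is_derive_eq; rewrite /GRing.scale /=; ring.
set E := expR (2 * b * Num.sqrt (f x) / Num.sqrt D).
pose base h := f h / (1 - eps * r h + eps ^+ 2 * f h) *
  expR (2 * b * Num.sqrt (f h) / Num.sqrt (1 + eps * r h + eps ^+ 2 * f h)).
have base' : is_derive x 1 base (f x / B * E * zeta_rf_logderiv (r x) (f x) dr df).
  apply: is_derive_eq; rewrite /GRing.scale /= -/B -/D -/E /zeta_rf_logderiv -/B -/D.
  have sqrtf_gt0 : 0 < Num.sqrt (f x) by rewrite sqrtr_gt0.
  have sqrtD_gt0 : 0 < Num.sqrt D by rewrite sqrtr_gt0.
  by field; rewrite !gt_eqF.
have base_gt0 : 0 < base x by rewrite mulr_gt0 ?divr_gt0 ?expR_gt0.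
apply: is_derive_eq (is_derive1_comp (g := base) (is_derive1_powR c base_gt0) base') _.
rewrite powRB ?(gt_eqF base_gt0) ?implybT // powRr1 ?(ltW base_gt0) //.
rewrite /zeta_rf -/B -/D -/E -[f x / B * E]/(base x).
by field; rewrite gt_eqF.
Qed.

Lemma zeta_rf_logderiv_bound (Rd r f dr df : R) :
  0 <= eps -> 0 <= b -> 16 * eps * Rd <= 1 -> 4 * b * Rd <= 1 ->
  0 <= r <= Rd -> 0 < f -> 4 * f <= Rd ^+ 2 -> `|dr| <= 1 -> 2 * `|df| <= Rd ->
  `|zeta_rf_logderiv r f dr df| <= Rd / f.
Proof.
move=> eps_ge0 b_ge0 epsRd bRd /andP[r_ge0 r_le] f_gt0 fRd dr_le df_le.
have [s s_gt0 fE] : exists2 s, 0 < s & f = s ^+ 2.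
  by exists (Num.sqrt f); rewrite ?sqrtr_gt0 ?sqr_sqrtr ?ltW.
move: f_gt0 fRd; rewrite /zeta_rf_logderiv fE sqrtr_sqr (gtr0_norm s_gt0) => s2_gt0 sRd.
have s_le : 2 * s <= Rd by nra.
set B := 1 - eps * r + eps ^+ 2 * s ^+ 2.
set D := 1 + eps * r + eps ^+ 2 * s ^+ 2.
set q := Num.sqrt D.
have eps2s2_ge0 : 0 <= eps ^+ 2 * s ^+ 2 by rewrite -exprMn sqr_ge0.
have B_ge : 15 / 16 <= B by rewrite /B; nra.
have q_ge1 : 1 <= q by rewrite -sqrtr1 ler_sqrt /D; nra.
have eps_df : eps * `|df| <= 1 / 32.
  by have := ler_wpM2l eps_ge0 df_le; lra.
have eps2_df : eps ^+ 2 * `|df| <= eps.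
  by have := ler_wpM2l eps_ge0 eps_df; rewrite expr2 -mulrA; lra.
have dB_le : `|eps ^+ 2 * df - eps * dr| <= 2 * eps.
  by rewrite (le_trans (ler_normB _ _)) // !normrM ger0_norm //; nra.
have dD_le : `|eps * dr + eps ^+ 2 * df| <= 2 * eps.
  by rewrite (le_trans (ler_normD _ _)) // !normrM ger0_norm //; nra.
rewrite ler_pdivlMr // -{2}(gtr0_norm s2_gt0) -normrM.
set dB := eps ^+ 2 * df - eps * dr in dB_le *.
set dD := eps * dr + eps ^+ 2 * df in dD_le *.
have -> : (df / s ^+ 2 - dB / B + b * (df / (s * q) - s * dD / q ^+ 3)) * s ^+ 2
    = df - s ^+ 2 * dB / B + b * (s * df / q) - b * (s ^+ 3 * dD / q ^+ 3).
  by field; rewrite !gt_eqF //; lra.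
have := logderiv_B_term_le eps_ge0 epsRd s_gt0 s_le B_ge dB_le.
have := logderiv_f_term_le b_ge0 bRd s_gt0 s_le q_ge1 df_le.
have := logderiv_D_term_le eps_ge0 b_ge0 epsRd bRd s_gt0 s_le q_ge1 dD_le.
move: (s ^+ 2 * dB / B) (b * (s * df / q)) (b * (s ^+ 3 * dD / q ^+ 3)) => t2 t3 t4.
have := ler_normB (df - t2 + t3) t4.
have := ler_normD (df - t2) t3.
have := ler_normB df t2.
lra.
Qed.

End ZetaProfile.

Section RowNorm.
Context {R : realType} {k : nat}.
Implicit Types (y : 'rV[R]_k) (i : 'I_k) (h : R).

Lemma sqr_enorm y : enorm y ^+ 2 = \sum_i y ord0 i ^+ 2.
Proof. by rewrite sqr_sqrtr // sumr_ge0 // => i _; exact: sqr_ge0. Qed.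

Lemma abs_coord_le_enorm y i : `|y ord0 i| <= enorm y.
Proof.
rewrite -sqrtr_sqr ler_sqrt ?sumr_ge0 // => [|j _]; last exact: sqr_ge0.
by rewrite (bigD1 i) //= lerDl sumr_ge0 // => j _; exact: sqr_ge0.
Qed.

Lemma sqr_enorm_line y i h :
  enorm (h *: ebasis i + y) ^+ 2 = enorm y ^+ 2 + h * (2 * y ord0 i + h).
Proof.
rewrite !sqr_enorm (bigD1 i) //= [in RHS](bigD1 i) //= !mxE !eqxx.
rewrite (eq_bigr (fun j => y ord0 j ^+ 2)) => [|j /negbTE ji]; last first.
  by rewrite !mxE ji mulr0 add0r.
by rewrite /=; ring.
Qed.

End RowNorm.

Section CoordinateLines.
Context {R : realType} {m n : nat}.
Implicit Types (p : 'rV[R]_(m + n)) (h : R).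

Lemma tpart_lshift_line p j h :
  tpart (h *: ebasis (lshift n j) + p) = h *: ebasis j + tpart p.
Proof. by rewrite /tpart linearD linearZ /= /ebasis delta_mx_lshift row_mxKl. Qed.

Lemma xpart_lshift_line p j h : xpart (h *: ebasis (lshift n j) + p) = xpart p.
Proof.
by rewrite /xpart linearD linearZ /= /ebasis delta_mx_lshift row_mxKr scaler0 add0r.
Qed.

Lemma tpart_rshift_line p k h : tpart (h *: ebasis (rshift m k) + p) = tpart p.
Proof.
by rewrite /tpart linearD linearZ /= /ebasis delta_mx_rshift row_mxKl scaler0 add0r.
Qed.

Lemma xpart_rshift_line p k h :
  xpart (h *: ebasis (rshift m k) + p) = h *: ebasis k + xpart p.
Proof. by rewrite /xpart linearD linearZ /= /ebasis delta_mx_rshift row_mxKr. Qed.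

Lemma ff_sqr p : ff p = (rr p ^+ 2 - tau p ^+ 2) / 4.
Proof. by rewrite /ff /uu /vv; field. Qed.

Lemma ff_lshift_line p j h :
  ff (h *: ebasis (lshift n j) + p) = ff p - h * (2 * tpart p ord0 j + h) / 4.
Proof.
rewrite !ff_sqr /rr /tau xpart_lshift_line tpart_lshift_line sqr_enorm_line.
by move: (enorm _ ^+ 2) (enorm _ ^+ 2) (tpart p ord0 j) => X T t; field.
Qed.

Lemma ff_rshift_line p k h :
  ff (h *: ebasis (rshift m k) + p) = ff p + h * (2 * xpart p ord0 k + h) / 4.
Proof.
rewrite !ff_sqr /rr /tau xpart_rshift_line tpart_rshift_line sqr_enorm_line.
by move: (enorm _ ^+ 2) (enorm _ ^+ 2) (xpart p ord0 k) => X T x; field.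
Qed.

Lemma rr_lshift_line p j h : rr (h *: ebasis (lshift n j) + p) = rr p.
Proof. by rewrite /rr xpart_lshift_line. Qed.

Lemma rr_rshift_line p k h :
  rr (h *: ebasis (rshift m k) + p) = Num.sqrt (rr p ^+ 2 + h * (2 * xpart p ord0 k + h)).
Proof. by rewrite -sqr_enorm_line -xpart_rshift_line sqrtr_sqr ger0_norm ?sqrtr_ge0. Qed.

Lemma tau_lt_rr p : 0 < ff p -> tau p < rr p.
Proof.
have tau_ge0 : 0 <= tau p := sqrtr_ge0 _.
have rr_ge0 : 0 <= rr p := sqrtr_ge0 _.
rewrite ff_sqr; nra.
Qed.

Lemma coordinate_line_derivs p (al : 'I_(m + n)) : 0 < ff p ->
  exists dr df : R,
    [/\ is_derive (0 : R) 1 (fun h : R => rr (h *: ebasis al + p)) dr,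
        is_derive (0 : R) 1 (fun h : R => ff (h *: ebasis al + p)) df,
        `|dr| <= 1 & 2 * `|df| <= rr p].
Proof.
move=> /tau_lt_rr tau_lt.
have tau_ge0 : 0 <= tau p := sqrtr_ge0 _.
have r_gt0 : 0 < rr p by lra.
rewrite -(fintype.splitK al); case: (fintype.split al) => [j|k] /=.
- set t := tpart p ord0 j.
  exists 0, (- t / 2); split.
  + under eq_fun do rewrite rr_lshift_line.
    exact: is_derive_cst.
  + under eq_fun do rewrite ff_lshift_line.
    by apply: is_derive_eq; rewrite /GRing.scale /= /t; field.
  + by rewrite normr0.
  + have := abs_coord_le_enorm (tpart p) j.
    rewrite normrM normfV normrN (@ger0_norm _ 2) // -/(tau p) -/t; lra.
- set x := xpart p ord0 k.
  exists (x / rr p), (x / 2); split.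
  + have r2' : is_derive (0 : R) 1 (fun h : R => rr p ^+ 2 + h * (2 * x + h)) (2 * x).
      by apply: is_derive_eq; rewrite /GRing.scale /=; ring.
    have r2_gt0 : 0 < rr p ^+ 2 + 0 * (2 * x + 0) by rewrite mul0r addr0 exprn_gt0.
    under eq_fun do rewrite rr_rshift_line -/x.
    apply: is_derive_eq (is_derive1_comp (g := fun h => rr p ^+ 2 + h * (2 * x + h))
      (is_derive1_sqrt r2_gt0) r2') _.
    by rewrite mul0r addr0 sqrtr_sqr gtr0_norm //; field; rewrite gt_eqF.
  + under eq_fun do rewrite ff_rshift_line.
    by apply: is_derive_eq; rewrite /GRing.scale /= /x; field.
  + rewrite normrM normfV (gtr0_norm r_gt0) ler_pdivrMr // mul1r.
    exact: abs_coord_le_enorm.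
  + have := abs_coord_le_enorm (xpart p) k.
    rewrite normrM normfV (@ger0_norm _ 2) // -/(rr p) -/x; lra.
Qed.

End CoordinateLines.

Lemma zeta_rfE {R : realType} {m n : nat} (a b eps : R) (p : 'rV[R]_(m + n)) :
  0 <= eps -> zeta a b eps p = zeta_rf eps b (2 * a) (rr p) (ff p).
Proof.
move=> eps_ge0; rewrite /zeta.
have vv_ge0 : 0 <= vv p by rewrite /vv divr_ge0 // addr_ge0 ?sqrtr_ge0.
have -> : (1 + eps * uu p) * (1 - eps * vv p) = 1 - eps * rr p + eps ^+ 2 * ff p.
  by rewrite /ff /uu /vv; field.
have -> : Num.sqrt (1 - eps * uu p) * Num.sqrt (1 + eps * vv p)
    = Num.sqrt (1 + eps * rr p + eps ^+ 2 * ff p).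
  rewrite mulrC -sqrtrM; last exact: addr_ge0 ler01 (mulr_ge0 eps_ge0 vv_ge0).
  by congr Num.sqrt; rewrite /ff /uu /vv; field.
by [].
Qed.

Lemma derive_line {R : realType} {k : nat} (g : 'rV[R]_k -> R) (p e : 'rV[R]_k) :
  derive g p e = derive (fun h : R => g (h *: e + p)) 0 1.
Proof.
rewrite /derive; set q1 := fun h => h^-1 *: _; set q2 := fun h => h^-1 *: _.
suff -> : q1 = q2 by [].
by apply: funext => h; rewrite /q1 /q2 /= addr0 scale0r add0r [_%:A]mulr1.
Qed.

Lemma partial_zeta {R : realType} {m n : nat} (a b eps : R) (p : 'rV[R]_(m + n))
    (al : 'I_(m + n)) :
  0 <= eps -> eps * rr p < 1 -> 0 < ff p ->
  exists dr df : R, [/\ `|dr| <= 1, 2 * `|df| <= rr p &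
    partial al (zeta a b eps) p
      = 2 * a * zeta a b eps p * zeta_rf_logderiv eps b (rr p) (ff p) dr df].
Proof.
move=> eps_ge0 eps_rr f_gt0.
have [dr [df [r' f' dr_le df_le]]] := coordinate_line_derivs p al f_gt0.
exists dr, df; split => //.
have r_ge0 : 0 <= rr p := sqrtr_ge0 _.
have eps2f_ge0 : 0 <= eps ^+ 2 * ff p by rewrite mulr_ge0 ?sqr_ge0 ?ltW.
have := @is_derive_zeta_rf R eps b (2 * a) 0 dr df _ _ r' f'.
rewrite scale0r add0r => /(_ f_gt0 ltac:(lra) ltac:(nra)) zeta'.
rewrite /partial derive_line zeta_rfE //.
under eq_fun do rewrite zeta_rfE //.
by rewrite derive_val.
Qed.

Theorem lemma3p14 (R : realType) :
  exists (K c2 C : R), 0 < K /\ 0 < c2 /\ 0 < C /\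
  forall m n : nat, exists c1 : R, 0 < c1 /\
  forall (Om : set 'rV[R]_n) (Rd eps a b : R),
    open Om -> bounded_set Om -> smooth_boundary Om ->
    0 < Rd -> (forall x, Om x -> enorm x < Rd) ->
    0 < eps -> 0 < a -> 0 < b ->
    ((m + n) ^ 2)%:R <= a -> K * Rd <= a ->
    eps <= c1 * b -> b <= c2 / Rd ->
    forall p : 'rV[R]_(m + n), Om (xpart p) -> 0 < ff p ->
    forall al : 'I_(m + n),
      derivable (zeta a b eps) p (ebasis al) ->
      `|nabla_up al (zeta a b eps) p| <= C * a * Rd * zeta a b eps p / ff p.
Proof.
exists 1, (1 / 4), 2; do 3 (split; first lra).
move=> m n; exists (1 / 4); split; first lra.
move=> Om Rd eps a b _ _ _ Rd_gt0 Om_Rd eps_gt0 a_gt0 b_gt0 _ _ eps_b b_Rd p Om_p f_gt0 al _.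
have r_lt : rr p < Rd := Om_Rd _ Om_p.
have r_ge0 : 0 <= rr p := sqrtr_ge0 _.
have bRd : 4 * b * Rd <= 1 by move: b_Rd; rewrite ler_pdivlMr //; lra.
have epsRd : 16 * eps * Rd <= 1 by nra.
have fRd : 4 * ff p <= Rd ^+ 2 by rewrite ff_sqr; nra.
have zeta_ge0 : 0 <= zeta a b eps p := powR_ge0 _ _.
rewrite /nabla_up normrM (_ : `|ginv al| = 1); last first.
  by rewrite /ginv; case: ifP; rewrite ?normrN normr1.
have [dr [df [dr_le df_le ->]]] := partial_zeta a b eps p al (ltW eps_gt0) ltac:(nra) f_gt0.
rewrite mul1r !normrM (ger0_norm zeta_ge0) (gtr0_norm a_gt0) (@ger0_norm _ 2) //.
have -> : 2 * a * Rd * zeta a b eps p / ff p = 2 * a * zeta a b eps p * (Rd / ff p).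
  by ring.
apply: ler_wpM2l; first by rewrite mulr_ge0 //; lra.
by apply: zeta_rf_logderiv_bound => //; lra.
Qed.
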